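(* Fix a horizon $T$ (an even positive integer), a number of experts $n\ge 2$, and an error constant $\Delta\in(0,1]$. Then there exist a prompt $x$, a finite vocabulary $\mathcal{Y}$, deterministic expert policies $\pi_1,\dots,\pi_n$, and a family $\mathcal{R}$ of token-level reward functions $r$ with values in $[0,1]$ (all on the same deterministic token-level MDP described in the context) such that: (i) for every $r\in\mathcal{R}$, with $\pi^*$ a deterministic optimal policy for $r$, the following three properties hold: 1. (Existence of a near-optimal path) there exist $\varepsilon\in[0,1]$ with $\varepsilon\le\Delta$ and a routing sequence $P^*=(n_1^*,\dots,n_T^* )\in[n]^T$ such that $V^{\pi^*}(x)=V^{P^*}+\varepsilon$; 2. (Single policy coverage) for every $t\in\{0,\dots,T-1\}$, letting $y_{\le t}$ be the prefix generated by $\pi^*$ from $x$, $\Big|\max_{i\in[n]} Q^{\pi^*}\big(x,y_{\le t},\pi_i(x,y_{\le t})\big)-Q^{\pi^*}\big(x,y_{\le t},\pi^*(x,y_{\le t})\big)\Big|\le\Delta;$ 3. (Generalization coverage) for every prefix $(x,y_{\le t})$ with $t<T$ such that some full response $(x,y_{\le T})$ extending it satisfies $R(x,y_{\le T})\ge V^{\pi^*}(x)-\Delta$, the same inequality $\Big|\max_{i\in[n]} Q^{\pi^*}\big(x,y_{\le t},\pi_i(x,y_{\le t})\big)-Q^{\pi^*}\big(x,y_{\le t},\pi^*(x,y_{\le t})\big)\Big|\le\Delta$ holds; (ii) for every token-level routing algorithm $\mathcal{A}:\mathcal{O}\to[n]$ (with observations as defined in the context), there exists $r\in\mathcal{R}$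 such that $V^{\pi_{\mathcal{A}}}(x) < V^{\pi^*}(x)-T/2+2$, i.e. no such algorithm achieves $V^{\pi_{\mathcal{A}}}\ge V^{\pi^*}-T/2+2$ for all rewards in the family.
   Context: Token-level MDP for decoding: a prompt $x$, vocabulary $\mathcal{Y}$, states are prefixes $(x,y_{\le t})=(x,y_1,\dots,y_t)$, an action is the next token $y_{t+1}\in\mathcal{Y}$, transitions are deterministic: $(x,y_{\le t})\mapsto(x,y_{\le t},y_{t+1})$, responses have fixed length $T$. A reward function assigns $r(x,y_{\le t+1})\in[0,1]$ to each prefix; the total reward of a prefix is $R(x,y_{\le t})=\sum_{i=1}^t r(x,y_{\le i})$. For a deterministic policy $\pi$ (a map from prefixes to next tokens, written $\pi(x,y_{\le t})$), $V^{\pi}(x,y_{\le t})=\sum_{i=t+1}^T r(x,y_{\le i})$ along the continuation generated by $\pi$, and $Q^{\pi}(x,y_{\le t},y_{t+1})=r(x,y_{\le t+1})+V^{\pi}(x,y_{\le t+1})$; we also write $Q^{\pi}(x,y_{\le t+1})$ for $Q^{\pi}(x,y_{\le t},y_{t+1})$. $\pi^*$ is an optimal policy (maximizing $V$ from every state), $V^*=V^{\pi^*}$. Expert policies $\pi_1,\dots,\pi_n$ are deterministic. A routing sequence $P=(n_1,\dots,n_T)\in[n]^T$ generates the response $y_k=\pi_{n_k}(x,y_{\le k-1})$, and $V^{P}=R(x,y_{\le T})$ for that response. A token-level routing algorithm $\mathcal{A}:\mathcal{O}\to[n]$ works as follows: at each step $t=0,\dots,T-1$, at the currently visited prefix $(x,y_{\le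 t})$ it receives the observation $o_t=\{x,\ y_{\le t},\ \{Q^{\pi^*}(x,y_{\le k})\}_{k=1}^t,\ \{Q^{\pi^*}(x,y_{\le t},y)\}_{y\in\mathcal{Y}}\}$, outputs an expert index $n_{t+1}=\mathcal{A}(o_t)$, and the next token is $y_{t+1}=\pi_{n_{t+1}}(x,y_{\le t})$; $\mathcal{O}$ is the union over $t$ of the possible observations, and $\pi_{\mathcal{A}}$ is the resulting decoding policy with value $V^{\pi_{\mathcal{A}}}(x)=R(x,y_{\le T})$ for the generated response. *)

From mathcomp Require Import all_boot all_order all_algebra.
Set Implicit Arguments. Unset Strict Implicit. Unset Printing Implicit Defensive.
Import Order.TTheory GRing.Theory Num.Theory.
Local Open Scope ring_scope.

Section TokenMDP.
Variables (R : realFieldType) (X : Type) (Y : Type).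

(* prompts have type X, tokens type Y; a state is (x, ys) with ys = y_{<=t} *)
Definition policy := X -> seq Y -> Y.
Definition reward := X -> seq Y -> R.

Definition step (pi : policy) (x : X) (ys : seq Y) : seq Y := rcons ys (pi x ys).
Definition cont (pi : policy) (x : X) (ys : seq Y) (k : nat) : seq Y :=
  iter k (step pi x) ys.

Definition totR (r : reward) (x : X) (ys : seq Y) : R :=
  \sum_(i < size ys) r x (take i.+1 ys).

Definition V (T : nat) (r : reward) (pi : policy) (x : X) (ys : seq Y) : R :=
  let zs := cont pi x ys (T - size ys) in
  \sum_(size ys <= i < T) r x (take i.+1 zs).

Definition Qs (T : nat) (r : reward) (pi : policy) (x : X) (ys : seq Y) : R :=
  r x ys + V T r pi x ys.
Definition Q (T : nat) (r : reward) (pi : policy) (x : X) (ys : seq Y) (y : Y) : R :=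
  Qs T r pi x (rcons ys y).

Definition optimal (T : nat) (r : reward) (pistar : policy) : Prop :=
  forall (pi : policy) (x : X) (ys : seq Y), V T r pi x ys <= V T r pistar x ys.

Definition route_resp (n : nat) (pis : 'I_n -> policy) (x : X) (P : seq 'I_n) : seq Y :=
  foldl (fun ys i => rcons ys (pis i x ys)) [::] P.
Definition VP (r : reward) (n : nat) (pis : 'I_n -> policy) (x : X) (P : seq 'I_n) : R :=
  totR r x (route_resp pis x P).

Record obs := Obs {
  o_prompt : X;
  o_prefix : seq Y;
  o_qhist : seq R;
  o_qnext : Y -> R }.

Definition observe (T : nat) (r : reward) (pistar : policy) (x : X) (ys : seq Y) : obs :=
  Obs x ys [seq Qs T r pistar x (take k ys) | k <- iota 1 (size ys)]
      (fun y => Q T r pistar x ys y).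

Definition alg_policy (n : nat) (pis : 'I_n -> policy) (A : obs -> 'I_n)
  (T : nat) (r : reward) (pistar : policy) : policy :=
  fun x ys => pis (A (observe T r pistar x ys)) x ys.

(* maximum of a nonempty list (0 for the empty list, never used here) *)
Definition seqmax (s : seq R) : R :=
  if s is a :: s' then foldr Num.max a s' else 0.
Definition maxI (n : nat) (F : 'I_n -> R) : R := seqmax [seq F i | i <- enum 'I_n].

Definition cov_gap (T : nat) (r : reward) (pistar : policy) (n : nat)
  (pis : 'I_n -> policy) (x : X) (ys : seq Y) : R :=
  `| maxI (fun i => Q T r pistar x ys (pis i x ys)) - Q T r pistar x ys (pistar x ys) |.

End TokenMDP.

From mathcomp Require Import all_boot all_order all_algebra.
From mathcomp Require Import lra.
From Stdlib Require Import FunctionalExtensionality.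
Set Implicit Arguments. Unset Strict Implicit. Unset Printing Implicit Defensive.
Import Order.TTheory GRing.Theory Num.Theory.
Local Open Scope ring_scope.

(* Tokens are [None] and the expert tokens [Some b]; expert 0 always writes
   [Some true], every other expert [Some false].  Under [trap_reward Delta k]
   every token after the first earns 1, except in a response opening with the
   trap token [k]: there expert tokens earn only 1 - Delta, and nothing once the
   second and third tokens were expert tokens as well.  Writing [None] forever
   is optimal (value T - 1), and so is routing every step to an expert whose
   token is not [k].  At a prefix that is not trapped every expert token loses at
   most Delta against an optimal policy, while a trapped prefix cannot be
   completed to within 2 Delta of the optimum; this gives both coverage
   properties.  On the other hand every first token has the same Q-value T - 1,
   so the first observation of a routing algorithm does not depend on [k].
   Choosing [k] as the token of the expert it routes to first traps the
   algorithm, which then only emits expert tokens and collects at most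
   2 (1 - Delta) < T/2 + 1. *)

Section Continuation.
Variables (X Y : Type) (pi : policy X Y) (x : X).

Lemma contSr ys k : cont pi x ys k.+1 = cont pi x (step pi x ys) k.
Proof. by rewrite /cont iterSr. Qed.

Lemma contD ys a b : cont pi x ys (a + b) = cont pi x (cont pi x ys a) b.
Proof. by rewrite /cont addnC iterD. Qed.

Lemma contS ys k : cont pi x ys k.+1 = step pi x (cont pi x ys k).
Proof. by []. Qed.

Lemma cont_cat ys k : exists2 s, cont pi x ys k = ys ++ s & size s = k.
Proof.
elim: k ys => [|k IHk] ys; first by exists [::]; rewrite ?cats0.
rewrite contSr; have [s -> <-] := IHk (step pi x ys).
by exists (pi x ys :: s); rewrite ?cat_rcons.
Qed.

Lemma size_cont ys k : size (cont pi x ys k) = (size ys + k)%N.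
Proof. by have [s -> <-] := cont_cat ys k; rewrite size_cat. Qed.

Lemma take_cont ys j k : (j <= k)%N ->
  take (size ys + j) (cont pi x ys k) = cont pi x ys j.
Proof.
move=> le_jk; rewrite -(subnKC le_jk) contD.
have [s -> _] := cont_cat (cont pi x ys j) (k - j).
by rewrite -(size_cont ys j) take_size_cat.
Qed.

Lemma head_cont y0 k : (0 < k)%N -> head y0 (cont pi x [::] k) = pi x [::].
Proof.
case: k => // k _; rewrite contSr.
by have [s -> _] := cont_cat (step pi x [::]) k.
Qed.

Lemma all_cont (P : pred Y) ys k :
  (forall zs, P (pi x zs)) -> all P ys -> all P (cont pi x ys k).
Proof.
move=> Ppi; elim: k ys => [|k IHk] ys Pys //.
by rewrite contSr; apply: IHk; rewrite all_rcons Ppi.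
Qed.

End Continuation.

Section Values.
Variables (R : realFieldType) (X Y : Type) (T : nat) (r : reward R X Y).
Variables (pi : policy X Y) (x : X).

Lemma V_step ys : (size ys < T)%N ->
  V T r pi x ys = r x (step pi x ys) + V T r pi x (step pi x ys).
Proof.
move=> ltyT; rewrite /V size_rcons -subnSK // big_ltn // contSr.
congr (_ + _); rewrite -[in take _ _](addn0 (size ys).+1) -(size_rcons ys (pi x ys)).
by rewrite take_cont.
Qed.

Lemma Q_self ys : (size ys < T)%N -> Q T r pi x ys (pi x ys) = V T r pi x ys.
Proof. by move=> ltyT; rewrite /Q /Qs -/(step pi x ys) -V_step. Qed.

Lemma V_nil_totR : V T r pi x [::] = totR r x (cont pi x [::] T).
Proof. by rewrite /V /totR size_cont subn0 big_mkord. Qed.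

End Values.

Section Maximum.
Variable R : realFieldType.

Lemma seqmax_ge (s : seq R) y : y \in s -> y <= seqmax s.
Proof.
case: s => // a s; rewrite /seqmax; elim: s => [|b s IHs]; first by rewrite inE => /eqP ->.
rewrite /= le_max !inE => /orP[ya|/orP[/eqP->|ys]]; rewrite ?lexx ?orbT //.
- by rewrite IHs ?inE ?ya ?orbT.
- by rewrite IHs ?inE ?ys ?orbT.
Qed.

Lemma seqmax_le (s : seq R) h : s != [::] -> all (<= h) s -> seqmax s <= h.
Proof.
case: s => // a s _ /= /andP[ah]; elim: s => //= b s IHs /andP[bh sh].
by rewrite ge_max bh IHs.
Qed.

Lemma maxI_bounds n (F : 'I_n -> R) (i0 : 'I_n) lo hi :
  lo <= F i0 -> (forall i, F i <= hi) -> lo <= maxI F <= hi.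
Proof.
move=> loF Fhi; have Fi0 : F i0 \in [seq F i | i <- enum 'I_n].
  by apply: map_f; rewrite mem_enum.
rewrite (le_trans loF (seqmax_ge Fi0)) seqmax_le //; first by apply: contraTneq Fi0 => ->.
by apply/allP => _ /mapP[i _ ->]; apply: Fhi.
Qed.

End Maximum.

Section TrapConstruction.
Variables (R : realFieldType) (Delta : R).
Hypotheses (Delta_ge0 : 0 <= Delta) (Delta_le1 : Delta <= 1).

Local Notation token := (option bool).

Definition trap_reward (k : token) : reward R unit token := fun _ s =>
  if (size s <= 1)%N then 0 else if head None s != k then 1
  else if last None s == None then 1
  else if [&& (3 < size s)%N, nth None s 1 != None & nth None s 2 != None] then 0
  else 1 - Delta.

Definition opt_value (T t : nat) : R := \sum_(t <= i < T) (i != 0)%N%:R.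

Definition none_policy : policy unit token := fun _ _ => None.

Definition expert n (i : 'I_n) : policy unit token := fun _ _ => Some (val i == 0%N).

Variable k : token.

Lemma trap_reward_le x s : trap_reward k x s <= (1 < size s)%N%:R.
Proof.
rewrite /trap_reward leqNgt; case: (1 < size s)%N => //=.
by repeat case: ifP => _; rewrite ?ler01 // gerBl.
Qed.

Lemma trap_reward_bounds x s : 0 <= trap_reward k x s <= 1.
Proof.
rewrite (le_trans (trap_reward_le x s)) ?lern1 ?leq_b1 ?andbT //.
by rewrite /trap_reward; repeat case: ifP => _; rewrite ?subr_ge0.
Qed.

Lemma trap_reward_take_le x s i : trap_reward k x (take i.+1 s) <= (i != 0)%N%:R.
Proof.
apply: le_trans (trap_reward_le x _) _; rewrite ler_nat size_take_min.
by case: i => [|i]; rewrite ?leq_b1 // ltnNge geq_minl.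
Qed.

Lemma trap_reward_last_none x s :
  (1 < size s)%N -> last None s = None -> trap_reward k x s = 1.
Proof. by rewrite /trap_reward ltnNge => /negbTE -> ->; case: ifP. Qed.

Lemma opt_value_rec T t : (t < T)%N -> opt_value T t = (t != 0)%N%:R + opt_value T t.+1.
Proof. exact: big_ltn. Qed.

Lemma opt_value0 m : opt_value m.+1 0 = m%:R.
Proof. by rewrite /opt_value big_nat_recl // add0r sumr_const_nat subn0. Qed.

Lemma totR_avoiding x y m : y != k -> totR (trap_reward k) x (nseq m y) = opt_value m 0.
Proof.
move=> yk; rewrite /totR size_nseq.
rewrite -(big_mkord xpredT (fun i => trap_reward k x (take i.+1 (nseq m y)))).
apply: eq_big_nat => i /andP[_ lt_im]; rewrite take_nseq //.
by case: i {lt_im} => [|i]; rewrite /trap_reward //= yk.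
Qed.

Lemma route_resp_const n (j : 'I_n) x m :
  route_resp (@expert n) x (nseq m j) = nseq m (Some (val j == 0%N)).
Proof.
rewrite /route_resp -[RHS]cat0s; elim: m [::] => [|m IHm] ys /=; first by rewrite cats0.
by rewrite IHm cat_rcons.
Qed.

Definition trapped (ys : seq token) :=
  [&& (3 <= size ys)%N, head None ys == k, nth None ys 1 != None & nth None ys 2 != None].

Lemma trap_reward_untrapped x ys b : ~~ trapped ys ->
  (size ys != 0)%N%:R - Delta <= trap_reward k x (rcons ys (Some b)).
Proof.
(* [lra] ignores section hypotheses, hence the local copy. *)
have D0 := Delta_ge0; case: ys => [_|a s]; first by rewrite /trap_reward /=; lra.
rewrite /trap_reward /trapped /= size_rcons last_rcons /=.
case: (a =P k) => [_|_] /=; last by lra.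
by case: s => [|b1 [|b2 s]] /=; rewrite ?ltnS; try case: ifP; lra.
Qed.

Lemma totR_trapped x ys zs : trapped ys -> take (size ys) zs = ys ->
  totR (trap_reward k) x zs <= opt_value (size zs) 0 - Delta *+ 2.
Proof.
case: ys => [|y0 [|y1 [|y2 ys]]]; rewrite /trapped //= => /and3P[/eqP-> y1N y2N].
case: zs => [|z0 [|z1 [|z2 zs]]] //= [-> -> -> _].
rewrite /totR /= !big_ord_recl; set S := \sum_(i < size zs) _.
have S_le : S <= (size zs)%:R.
  apply: le_trans (ler_sum _ (fun i _ => proj2 (andP (trap_reward_bounds x _)))) _.
  by rewrite sumr_const card_ord.
have -> : opt_value (size zs).+3 0 = (size zs)%:R + 2 by rewrite opt_value0 -addn2 natrD.
rewrite /trap_reward /= eqxx (negbTE y1N) addn0 take0 /= (negbTE y2N).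
lra.
Qed.

Lemma totR_sprung x zs : all (fun y => y != None) zs -> head None zs = k ->
  totR (trap_reward k) x zs <= (1 - Delta) *+ 2.
Proof.
have := Delta_le1; rewrite /totR.
case: zs => [|z0 [|z1 [|z2 zs]]] /= le_D1; rewrite ?big_ord0 ?big_ord_recl ?big_ord0; try lra.
- by move=> _ _; rewrite /trap_reward /=; lra.
- move=> /and3P[_ z1N _] <-; rewrite /trap_reward /= eqxx (negbTE z1N) /=; lra.
move=> /and4P[_ z1N z2N zsN] <-; rewrite big1 => [|i _].
  rewrite /trap_reward /= eqxx (negbTE z1N) addn0 take0 /= (negbTE z2N); lra.
have lastN : last z2 (take i.+1 zs) != None.
  have := mem_last z2 (take i.+1 zs); rewrite inE => /orP[/eqP-> // | /mem_take].
  exact: (allP zsN).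
by rewrite /trap_reward /= eqxx (negbTE z1N) (negbTE z2N) add0n (negbTE lastN) size_takel.
Qed.

Variable T : nat.

Lemma V_le_opt_value (pi : policy unit token) x ys :
  V T (trap_reward k) pi x ys <= opt_value T (size ys).
Proof. by apply: ler_sum => i _; apply: trap_reward_take_le. Qed.

Lemma V_none_policy x ys : V T (trap_reward k) none_policy x ys = opt_value T (size ys).
Proof.
apply: eq_big_nat => i /andP[le_yi lt_iT].
have -> : take i.+1 (cont none_policy x ys (T - size ys)) =
          cont none_policy x ys (i.+1 - size ys).
  by rewrite -(take_cont _ _ _ (leq_sub2r _ lt_iT)) subnKC // ltnW.
case: i le_yi {lt_iT} => [|i] le_yi; first by case: ys le_yi.
rewrite subSn // contS trap_reward_last_none ?last_rcons // size_rcons size_cont.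
by rewrite subnKC.
Qed.

Lemma optimal_none_policy : optimal T (trap_reward k) none_policy.
Proof. by move=> pi x ys; rewrite V_none_policy V_le_opt_value. Qed.

Lemma optimal_route n : (2 <= n)%N ->
  exists P : T.-tuple 'I_n, VP (trap_reward k) (@expert n) tt P = opt_value T 0.
Proof.
move=> n_ge2; pose j : 'I_n := if k == Some true then Ordinal n_ge2 else Ordinal (ltnW n_ge2).
exists (nseq_tuple T j); rewrite /VP route_resp_const totR_avoiding //.
by rewrite /j; case: (k =P Some true) => [->|/eqP] //=; rewrite eq_sym.
Qed.

Variable pistar : policy unit token.
Hypothesis pistar_opt : optimal T (trap_reward k) pistar.

Lemma V_optimal x ys : V T (trap_reward k) pistar x ys = opt_value T (size ys).
Proof.
apply/le_anti; rewrite V_le_opt_value -(V_none_policy x ys).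
exact: pistar_opt.
Qed.

Lemma Q_optimal x ys y :
  Q T (trap_reward k) pistar x ys y =
    trap_reward k x (rcons ys y) + opt_value T (size ys).+1.
Proof. by rewrite /Q /Qs V_optimal size_rcons. Qed.

Lemma Q_optimal_self x ys : (size ys < T)%N ->
  Q T (trap_reward k) pistar x ys (pistar x ys) = opt_value T (size ys).
Proof. by move=> ltyT; rewrite Q_self // V_optimal. Qed.

Lemma observe_nil x :
  observe T (trap_reward k) pistar x [::] = Obs x [::] [::] (fun=> opt_value T 1).
Proof.
rewrite /observe; congr Obs; apply: functional_extensionality => y.
by rewrite Q_optimal /trap_reward /= add0r.
Qed.

Lemma cov_gap_untrapped n (i0 : 'I_n) x ys : (size ys < T)%N -> ~~ trapped ys ->
  cov_gap T (trap_reward k) pistar (@expert n) x ys <= Delta.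
Proof.
move=> ltyT untrapped_ys.
have Qbounds : opt_value T (size ys) - Delta
    <= maxI (fun i : 'I_n => Q T (trap_reward k) pistar x ys (expert i x ys))
    <= opt_value T (size ys).
  apply: (maxI_bounds (i0 := i0)) => [|i]; rewrite Q_optimal (opt_value_rec ltyT).
    by have := trap_reward_untrapped x (val i0 == 0%N) untrapped_ys; lra.
  have := trap_reward_le x (rcons ys (expert i x ys)).
  by rewrite size_rcons ltnS lt0n; lra.
by rewrite /cov_gap Q_optimal_self // ler_norml; lra.
Qed.

Lemma near_optimal_cov_gap n (i0 : 'I_n) x ys : 0 < Delta -> (size ys < T)%N ->
  (exists zs, [/\ size zs = T, take (size ys) zs = ys &
     V T (trap_reward k) pistar x [::] - Delta <= totR (trap_reward k) x zs]) ->
  cov_gap T (trap_reward k) pistar (@expert n) x ys <= Delta.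
Proof.
move=> Delta_gt0 ltyT [zs [size_zs take_zs near_opt]].
apply: (cov_gap_untrapped i0) => //; apply: contraTN near_opt => trapped_ys.
have := totR_trapped x trapped_ys take_zs.
by rewrite -ltNge V_optimal size_zs; lra.
Qed.

Lemma cov_gap_optimal_path n (i0 : 'I_n) x t : 0 < Delta -> (t < T)%N ->
  cov_gap T (trap_reward k) pistar (@expert n) x (cont pistar x [::] t) <= Delta.
Proof.
move=> Delta_gt0 ltT; apply: (near_optimal_cov_gap i0) => //.
  by rewrite size_cont.
exists (cont pistar x [::] T); split; first by rewrite size_cont.
  by rewrite size_cont take_cont // ltnW.
by rewrite V_nil_totR; lra.
Qed.

End TrapConstruction.

Lemma routing_lower_bound (R : realFieldType) (Delta : R) T n
    (A : obs R unit (option bool) -> 'I_n) :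
  0 < Delta <= 1 -> (0 < T)%N -> ~~ odd T ->
  exists b, forall pistar, optimal T (trap_reward Delta (Some b)) pistar ->
    V T (trap_reward Delta (Some b))
        (alg_policy (@expert n) A T (trap_reward Delta (Some b)) pistar) tt [::]
      < V T (trap_reward Delta (Some b)) pistar tt [::] - T%:R / 2 + 2.
Proof.
move=> /andP[Delta_gt0 Delta_le1] T_gt0 T_even.
have Delta_ge0 := ltW Delta_gt0.
pose i0 := A (Obs tt [::] [::] (fun=> opt_value R T 1)).
exists (val i0 == 0%N) => pistar pistar_opt.
set piA := alg_policy _ _ _ _ _.
have piA_nil : piA tt [::] = Some (val i0 == 0%N).
  by rewrite /piA /alg_policy observe_nil.
have piA_experts : all (fun y => y != None) (cont piA tt [::] T) by apply: all_cont.
have := totR_sprung Delta_le1 tt piA_experts (etrans (head_cont piA tt None T_gt0) piA_nil).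
rewrite -V_nil_totR (V_optimal Delta_ge0 pistar_opt).
rewrite -[in opt_value _ T 0](prednK T_gt0) opt_value0.
have T_ge2 : (2 <= T)%N by move: T_gt0 T_even; case: (T) => [|[]].
have : T%:R = T.-1%:R + 1 :> R by rewrite natr1 prednK.
have : 2 <= T%:R :> R by rewrite ler_nat.
lra.
Qed.

Theorem theorem1 (R : realFieldType) (T n : nat) (Delta : R) :
  (0 < T)%N -> ~~ odd T -> (2 <= n)%N -> 0 < Delta <= 1 ->
  exists (X : Type) (x : X) (Y : finType) (pis : 'I_n -> policy X Y)
         (Rfam : reward R X Y -> Prop),
    (forall r, Rfam r -> forall (x' : X) (ys : seq Y), 0 <= r x' ys <= 1) /\
    (forall r, Rfam r ->
       (exists pistar : policy X Y, optimal T r pistar) /\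
       forall pistar : policy X Y, optimal T r pistar ->
       [/\ (* 1. near-optimal path *)
           exists (eps : R) (P : T.-tuple 'I_n),
             [/\ 0 <= eps <= 1, eps <= Delta &
                 V T r pistar x [::] = VP r pis x P + eps],
           (* 2. single policy coverage *)
           forall t : nat, (t < T)%N ->
             cov_gap T r pistar pis x (cont pistar x [::] t) <= Delta
         & (* 3. generalization coverage *)
           forall ys : seq Y, (size ys < T)%N ->
             (exists zs : seq Y, [/\ size zs = T, take (size ys) zs = ys &
                 V T r pistar x [::] - Delta <= totR r x zs]) ->
             cov_gap T r pistar pis x ys <= Delta]) /\
    (forall A : obs R X Y -> 'I_n,
       exists r, Rfam r /\
         forall pistar : policy X Y, optimal T r pistar ->
           V T r (alg_policy pis A T r pistar) x [::]
             < V T r pistar x [::] - T%:R / 2 + 2).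
Proof.
move=> T_gt0 T_even n_ge2 Delta_bounds; have /andP[Delta_gt0 Delta_le1] := Delta_bounds.
have Delta_ge0 := ltW Delta_gt0; pose i0 : 'I_n := Ordinal (ltnW n_ge2).
exists unit, tt, (option bool), (@expert n), (fun r => exists b, r = trap_reward Delta (Some b)).
split; [|split].
- by move=> _ [b ->] x ys; apply: trap_reward_bounds.
- move=> _ [b ->]; split; first by exists none_policy; apply: optimal_none_policy.
  move=> pistar pistar_opt; split.
  + have [P VP_opt] := optimal_route Delta (Some b) T n_ge2.
    by exists 0, P; rewrite lexx ler01 Delta_ge0 addr0 VP_opt (V_optimal Delta_ge0 pistar_opt).
  + by move=> t; apply: (cov_gap_optimal_path Delta_ge0 Delta_le1 pistar_opt i0).
  + by move=> ys; apply: (near_optimal_cov_gap Delta_ge0 Delta_le1 pistar_opt i0).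
- move=> A; have [b lower_bound] := routing_lower_bound A Delta_bounds T_gt0 T_even.
  by exists (trap_reward Delta (Some b)); split; first by exists b.
Qed.
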